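(* Let $(\mathfrak A,\mathfrak A_0)$ be a Banach quasi *-algebra with unit $e$. The following are equivalent: (i) $\mathcal R_c(\mathfrak A,\mathfrak A_0)$ is sufficient; (ii) $(\mathfrak A,\mathfrak A_0)$ is fully representable. If moreover the positivity condition (P) holds, then (i) and (ii) are also equivalent to: (iii) $(\mathfrak A,\mathfrak A_0)$ is *-semisimple.
   Context: A quasi *-algebra $(\mathfrak A,\mathfrak A_0)$ consists of a complex vector space $\mathfrak A$ and a *-algebra $\mathfrak A_0$ which is a linear subspace of $\mathfrak A$, such that: $\mathfrak A$ carries an involution $a\mapsto a^*$ extending that of $\mathfrak A_0$; $\mathfrak A$ is a bimodule over $\mathfrak A_0$ whose module multiplications extend the multiplication of $\mathfrak A_0$, with $(xa)y=x(ay)$ and $a(xy)=(ax)y$ for all $a\in\mathfrak A$, $x,y\in\mathfrak A_0$; and $(ax)^*=x^*a^*$ for all $a\in\mathfrak A$, $x\in\mathfrak A_0$. A unit is an element $e\in\mathfrak A_0$ with $ae=ea=a$ for all $a\in\mathfrak A$. A normed quasi *-algebra is a quasi *-algebra with a norm $\|\cdot\|$ on $\mathfrak A$ such that $\|a^*\|=\|a\|$ for all $a$, $\mathfrak A_0$ is dense in $\mathfrak A$, and for each $x\in\mathfrak A_0$ the map $a\mapsto ax$ is continuous on $\mathfrak A$ (hence so is $a\mapsto xa$). It is a Banach quasi *-algebra if $(\mathfrak A,\|\cdot\|)$ is complete. A linear functional $\omega$ on $\mathfrak A$ is representable if (L.1) $\omega(x^*x)\ge0$ for all $x\in\mathfrak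 A_0$; (L.2) $\omega(y^*a^*x)=\overline{\omega(x^*ay)}$ for all $x,y\in\mathfrak A_0$, $a\in\mathfrak A$; (L.3) for every $a\in\mathfrak A$ there is $\gamma_a>0$ with $|\omega(a^*x)|\le\gamma_a\,\omega(x^*x)^{1/2}$ for all $x\in\mathfrak A_0$. $\mathcal R_c(\mathfrak A,\mathfrak A_0)$ is the set of norm-continuous representable functionals. For $\omega\in\mathcal R_c(\mathfrak A,\mathfrak A_0)$, $\varphi_\omega(x,y)=\omega(y^*x)$ on $\mathfrak A_0\times\mathfrak A_0$ is closable (i.e. $\varphi_\omega(x_n,x_n)\to0$ whenever $(x_n)\subset\mathfrak A_0$, $\|x_n\|\to0$ and $\varphi_\omega(x_n-x_m,x_n-x_m)\to0$); its closure $\overline{\varphi}_\omega$ has domain $D(\overline{\varphi}_\omega)$ consisting of those $a\in\mathfrak A$ admitting $(x_n)\subset\mathfrak A_0$ with $\|x_n-a\|\to0$ and $\varphi_\omega(x_n-x_m,x_n-x_m)\to0$. Set $\mathfrak A_{\mathcal R}=\bigcap_{\omega\in\mathcal R_c(\mathfrak A,\mathfrak A_0)}D(\overline{\varphi}_\omega)$ (and $\mathfrak A_{\mathcal R}=\mathfrak A$ if $\mathcal R_c=\{0\}$). $\mathfrak A_0^+=\{\sum_{k=1}^n x_k^*x_k: x_k\in\mathfrak A_0,n\in\mathbb N\}$ and $\mathfrak A^+$ is its norm closure (its elements are called positive, written $a\ge0$). $\mathcal R_c(\mathfrak A,\mathfrak A_0)$ is sufficient if for every $a\in\mathfrak A^+$,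 $a\ne0$, there is $\omega\in\mathcal R_c(\mathfrak A,\mathfrak A_0)$ with $\omega(a)>0$. $(\mathfrak A,\mathfrak A_0)$ is fully representable if $\mathcal R_c(\mathfrak A,\mathfrak A_0)$ is sufficient and $\mathfrak A_{\mathcal R}=\mathfrak A$. $\mathcal S_{\mathfrak A_0}(\mathfrak A)$ is the set of sesquilinear forms $\Omega$ on $\mathfrak A\times\mathfrak A$ with $\Omega(a,a)\ge0$, $\Omega(ax,y)=\Omega(x,a^*y)$ ($a\in\mathfrak A$, $x,y\in\mathfrak A_0$) and $|\Omega(a,b)|\le\|a\|\|b\|$ for all $a,b\in\mathfrak A$. $(\mathfrak A,\mathfrak A_0)$ is *-semisimple if for every $a\neq0$ there is $\Omega\in\mathcal S_{\mathfrak A_0}(\mathfrak A)$ with $\Omega(a,a)>0$. Condition (P): if $a\in\mathfrak A$ and $\omega(x^*ax)\ge0$ for every $\omega\in\mathcal R_c(\mathfrak A,\mathfrak A_0)$ and every $x\in\mathfrak A_0$, then $a\in\mathfrak A^+$. *)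

From Stdlib Require Import Reals List.
Open Scope R_scope.

Definition C : Type := (R * R)%type.
Definition Re (z : C) : R := fst z.
Definition Im (z : C) : R := snd z.
Definition C0 : C := (0, 0).
Definition C1 : C := (1, 0).
Definition Cadd (z w : C) : C := (Re z + Re w, Im z + Im w).
Definition Cmul (z w : C) : C :=
  (Re z * Re w - Im z * Im w, Re z * Im w + Im z * Re w).
Definition Cconj (z : C) : C := (Re z, - Im z).
Definition Cabs (z : C) : R := sqrt (Re z * Re z + Im z * Im z).
Definition Cnonneg (z : C) : Prop := Im z = 0 /\ 0 <= Re z.
Definition Cpos (z : C) : Prop := Im z = 0 /\ 0 < Re z.

(** The module multiplications
    (and the product of A_0) are encoded by one total operation [mul]; only its
    values with at least one factor in A_0 are constrained (and used). *)
Record BanachQSA : Type := {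
  car :> Type;
  add : car -> car -> car;
  zero : car;
  opp : car -> car;
  scal : C -> car -> car;
  star : car -> car;
  mul : car -> car -> car;
  A0 : car -> Prop;
  norm : car -> R;
  add_assoc : forall a b c, add a (add b c) = add (add a b) c;
  add_comm : forall a b, add a b = add b a;
  add_zero : forall a, add a zero = a;
  add_opp : forall a, add a (opp a) = zero;
  scal_one : forall a, scal C1 a = a;
  scal_mul : forall l m a, scal (Cmul l m) a = scal l (scal m a);
  scal_addl : forall l m a, scal (Cadd l m) a = add (scal l a) (scal m a);
  scal_addr : forall l a b, scal l (add a b) = add (scal l a) (scal l b);
  A0_zero : A0 zero;
  A0_add : forall x y, A0 x -> A0 y -> A0 (add x y);
  A0_scal : forall l x, A0 x -> A0 (scal l x);
  A0_mul : forall x y, A0 x -> A0 y -> A0 (mul x y);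
  A0_star : forall x, A0 x -> A0 (star x);
  mul_addl_r : forall a b x, A0 x -> mul (add a b) x = add (mul a x) (mul b x);
  mul_addr_r : forall a x y, A0 x -> A0 y -> mul a (add x y) = add (mul a x) (mul a y);
  mul_scal_r : forall l a x, A0 x -> mul (scal l a) x = scal l (mul a x);
  mul_scalr_r : forall l a x, A0 x -> mul a (scal l x) = scal l (mul a x);
  mul_addl_l : forall x y a, A0 x -> A0 y -> mul (add x y) a = add (mul x a) (mul y a);
  mul_addr_l : forall x a b, A0 x -> mul x (add a b) = add (mul x a) (mul x b);
  mul_scal_l : forall l x a, A0 x -> mul x (scal l a) = scal l (mul x a);
  mul_scall_l : forall l x a, A0 x -> mul (scal l x) a = scal l (mul x a);
  mul_assoc_mid : forall a x y, A0 x -> A0 y -> mul (mul x a) y = mul x (mul a y);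
  mul_assoc_r : forall a x y, A0 x -> A0 y -> mul a (mul x y) = mul (mul a x) y;
  mul_assoc_l : forall a x y, A0 x -> A0 y -> mul (mul x y) a = mul x (mul y a);
  star_add : forall a b, star (add a b) = add (star a) (star b);
  star_scal : forall l a, star (scal l a) = scal (Cconj l) (star a);
  star_star : forall a, star (star a) = a;
  star_mul : forall a x, A0 x -> star (mul a x) = mul (star x) (star a);
  norm_nonneg : forall a, 0 <= norm a;
  norm_eq0 : forall a, norm a = 0 -> a = zero;
  norm_scal : forall l a, norm (scal l a) = Cabs l * norm a;
  norm_triangle : forall a b, norm (add a b) <= norm a + norm b;
  norm_star : forall a, norm (star a) = norm a;
  A0_dense : forall a eps, 0 < eps -> exists x, A0 x /\ norm (add a (opp x)) < eps;
  mul_r_cont : forall x, A0 x -> forall a eps, 0 < eps ->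
    exists delta, 0 < delta /\ forall b, norm (add b (opp a)) < delta ->
      norm (add (mul b x) (opp (mul a x))) < eps;
  complete : forall u : nat -> car,
    (forall eps, 0 < eps -> exists N, forall n m, (N <= n)%nat -> (N <= m)%nat ->
        norm (add (u n) (opp (u m))) < eps) ->
    exists l, forall eps, 0 < eps -> exists N, forall n, (N <= n)%nat ->
        norm (add (u n) (opp l)) < eps
}.

Arguments add {_}. Arguments zero {_}. Arguments opp {_}. Arguments scal {_}.
Arguments star {_}. Arguments mul {_}. Arguments A0 {_}. Arguments norm {_}.

Section Notions.
Variable Q : BanachQSA.

Definition sub (a b : Q) : Q := add a (opp b).

Definition is_unit (e : Q) : Prop := A0 e /\ forall a : Q, mul a e = a /\ mul e a = a.

Definition linear_functional (w : Q -> C) : Prop :=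
  (forall a b, w (add a b) = Cadd (w a) (w b)) /\
  (forall l a, w (scal l a) = Cmul l (w a)).

Definition norm_continuous (w : Q -> C) : Prop :=
  forall a eps, 0 < eps -> exists delta, 0 < delta /\
    forall b, norm (sub b a) < delta -> Cabs (Cadd (w b) (Cmul (-1, 0) (w a))) < eps.

Definition representable (w : Q -> C) : Prop :=
  linear_functional w /\
  (forall x, A0 x -> Cnonneg (w (mul (star x) x))) /\
  (forall x y a, A0 x -> A0 y ->
     w (mul (mul (star y) (star a)) x) = Cconj (w (mul (mul (star x) a) y))) /\
  (forall a, exists g, 0 < g /\ forall x, A0 x ->
     Cabs (w (mul (star a) x)) <= g * sqrt (Re (w (mul (star x) x)))).

Definition Rc (w : Q -> C) : Prop := representable w /\ norm_continuous w.

(** domain of the closure of phi_w(x,y) = w(y^* x) *)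
Definition closure_domain (w : Q -> C) (a : Q) : Prop :=
  exists xs : nat -> Q, (forall n, A0 (xs n)) /\
    (forall eps, 0 < eps -> exists N, forall n, (N <= n)%nat -> norm (sub (xs n) a) < eps) /\
    (forall eps, 0 < eps -> exists N, forall n m, (N <= n)%nat -> (N <= m)%nat ->
       Cabs (w (mul (star (sub (xs n) (xs m))) (sub (xs n) (xs m)))) < eps).

Definition A_R (a : Q) : Prop :=
  (forall w, Rc w -> forall b, w b = C0) \/
  (forall w, Rc w -> closure_domain w a).

Definition A0plus (a : Q) : Prop :=
  exists l : list Q, l <> nil /\ Forall (fun x => A0 x) l /\
    a = fold_right (fun x s => add (mul (star x) x) s) zero l.

Definition Aplus (a : Q) : Prop :=
  forall eps, 0 < eps -> exists p, A0plus p /\ norm (sub a p) < eps.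

Definition Rc_sufficient : Prop :=
  forall a, Aplus a -> a <> zero -> exists w, Rc w /\ Cpos (w a).

Definition fully_representable : Prop :=
  Rc_sufficient /\ forall a, A_R a.

Definition in_S (Om : Q -> Q -> C) : Prop :=
  (forall a b c, Om (add a b) c = Cadd (Om a c) (Om b c)) /\
  (forall l a c, Om (scal l a) c = Cmul l (Om a c)) /\
  (forall a b c, Om a (add b c) = Cadd (Om a b) (Om a c)) /\
  (forall l a c, Om a (scal l c) = Cmul (Cconj l) (Om a c)) /\
  (forall a, Cnonneg (Om a a)) /\
  (forall a x y, A0 x -> A0 y -> Om (mul a x) y = Om x (mul (star a) y)) /\
  (forall a b, Cabs (Om a b) <= norm a * norm b).

Definition star_semisimple : Prop :=
  forall a, a <> zero -> exists Om, in_S Om /\ Cpos (Om a a).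

Definition condition_P : Prop :=
  forall a, (forall w, Rc w -> forall x, A0 x -> Cnonneg (w (mul (mul (star x) a) x))) ->
    Aplus a.

End Notions.

From Stdlib Require Import Reals List Lra Psatz Classical ClassicalEpsilon.
Open Scope R_scope.

(* A norm-continuous representable functional w satisfies (L.3) with constants gamma_a
   depending on a.  The sets {a : gamma_a <= n} are closed and cover A, so by Baire's
   theorem one of them contains a ball, and gamma_a can be taken to be K |a|.  Hence
   |w(a^* x)| <= M |a| |x| for x in A_0: every a lies in D(closure of phi_w), which gives
   (i) <=> (ii), and phi_w extends by density to a form in S_{A_0}(A), equal to r w(y^* b)
   at (b, y) with y in A_0 and r > 0.  Conversely every Om in S_{A_0}(A) and x in A_0 give
   the functional b |-> Om(bx, x) in R_c.
   If Om(a, a) > 0, density yields y in A_0 with Om(a, y) <> 0, and polarizing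
   (u, v) |-> Om(au, v) on A_0 at the unit yields x with Om(ax, x) <> 0; for a >= 0 the
   functional b |-> Om(bx, x) is then positive at a: (iii) => (i).  If Om(a, a) = 0 for
   every Om, then Cauchy-Schwarz against the unit in the extension of phi_w gives w(a) = 0,
   and applied to b |-> Om(bx, x) it gives w(x^* a x) = 0, for all w in R_c and x in A_0;
   under (P) such an a is positive, and sufficiency forces a = 0: (i) => (iii). *)

Ltac destruct_C := repeat match goal with z : C |- _ => destruct z end.
Ltac unfold_C := unfold Cadd, Cmul, Cconj, Re, Im, C0, C1, Cnonneg, Cpos in *; simpl in *.
Ltac C_ring := destruct_C; unfold_C; f_equal; ring.

Definition Csub (z w : C) : C := Cadd z (Cmul (-1, 0) w).

Lemma sqrt_le_of_sq a b : 0 <= b -> a <= b * b -> sqrt a <= b.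
Proof.
  intros Hb H. destruct (Rle_or_lt a 0) as [Ha|Ha].
  - rewrite (sqrt_neg_0 a Ha). lra.
  - rewrite <- (sqrt_square b Hb). apply sqrt_le_1_alt. lra.
Qed.

Lemma Cabs_nonneg z : 0 <= Cabs z.
Proof. apply sqrt_pos. Qed.

Lemma Cabs_mul z w : Cabs (Cmul z w) = Cabs z * Cabs w.
Proof. destruct_C. unfold Cabs; unfold_C. rewrite <- sqrt_mult_alt by nra. f_equal. ring. Qed.

Lemma Cabs_conj z : Cabs (Cconj z) = Cabs z.
Proof. destruct_C. unfold Cabs; unfold_C. f_equal. ring. Qed.

Lemma Cabs_real r : Cabs (r, 0) = Rabs r.
Proof.
  unfold Cabs; unfold_C. replace (r * r + 0 * 0) with (Rsqr r) by (unfold Rsqr; ring).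
  apply sqrt_Rsqr_abs.
Qed.

Lemma Cabs_zero : Cabs C0 = 0.
Proof. unfold C0. rewrite Cabs_real. apply Rabs_R0. Qed.

Lemma Cabs_Re z : Rabs (Re z) <= Cabs z.
Proof.
  destruct_C. unfold Cabs; unfold_C. rewrite <- sqrt_Rsqr_abs. apply sqrt_le_1_alt.
  unfold Rsqr. nra.
Qed.

Lemma Cabs_Im z : Rabs (Im z) <= Cabs z.
Proof.
  destruct_C. unfold Cabs; unfold_C. rewrite <- sqrt_Rsqr_abs. apply sqrt_le_1_alt.
  unfold Rsqr. nra.
Qed.

Lemma Cabs_le_sum z : Cabs z <= Rabs (Re z) + Rabs (Im z).
Proof.
  destruct z as [x y]. unfold Cabs; unfold_C.
  pose proof (Rabs_pos x); pose proof (Rabs_pos y).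
  apply sqrt_le_of_sq; [lra|].
  pose proof (Rsqr_abs x); pose proof (Rsqr_abs y). unfold Rsqr in *. nra.
Qed.

Lemma Cabs_triangle z w : Cabs (Cadd z w) <= Cabs z + Cabs w.
Proof.
  destruct z as [x1 y1], w as [x2 y2]. unfold Cabs; unfold_C.
  set (a := sqrt (x1 * x1 + y1 * y1)). set (b := sqrt (x2 * x2 + y2 * y2)).
  assert (Ha : 0 <= a) by apply sqrt_pos. assert (Hb : 0 <= b) by apply sqrt_pos.
  assert (Ha2 : a * a = x1 * x1 + y1 * y1) by (apply sqrt_sqrt; nra).
  assert (Hb2 : b * b = x2 * x2 + y2 * y2) by (apply sqrt_sqrt; nra).
  apply sqrt_le_of_sq; [lra|].
  (* Lagrange's identity *)
  assert (Hcs : (x1 * x2 + y1 * y2) * (x1 * x2 + y1 * y2) <= (a * b) * (a * b)).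
  { replace ((a * b) * (a * b)) with ((a * a) * (b * b)) by ring. rewrite Ha2, Hb2.
    pose proof (Rle_0_sqr (x1 * y2 - y1 * x2)); unfold Rsqr in *; nra. }
  assert (x1 * x2 + y1 * y2 <= a * b) by (pose proof (Rmult_le_pos _ _ Ha Hb); nra).
  nra.
Qed.

Lemma Cabs_eq0 z : Cabs z = 0 -> z = C0.
Proof.
  destruct z as [x y]. unfold Cabs; unfold_C. intros H.
  apply sqrt_eq_0 in H; [|nra]. f_equal; nra.
Qed.

Lemma Cabs_small_eq0 z : (forall eps, 0 < eps -> Cabs z < eps) -> z = C0.
Proof.
  intros H. apply Cabs_eq0, Rle_antisym; [|apply Cabs_nonneg].
  apply Rle_plus_epsilon. intros eps Heps. specialize (H eps Heps). lra.
Qed.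

Lemma Cabs_opp z : Cabs (Cmul (-1, 0) z) = Cabs z.
Proof. rewrite Cabs_mul, Cabs_real, Rabs_left by lra. ring. Qed.

Lemma Csub_C0 z : Csub z C0 = z.
Proof. unfold Csub. C_ring. Qed.

Lemma Cabs_Csub_sym z w : Cabs (Csub z w) = Cabs (Csub w z).
Proof. rewrite <- Cabs_opp. f_equal. unfold Csub. C_ring. Qed.

Lemma Cabs_Csub_triangle z1 z2 z3 :
  Cabs (Csub z1 z3) <= Cabs (Csub z1 z2) + Cabs (Csub z2 z3).
Proof.
  replace (Csub z1 z3) with (Cadd (Csub z1 z2) (Csub z2 z3)) by (unfold Csub; C_ring).
  apply Cabs_triangle.
Qed.

Lemma Cabs_le_Csub z w : Cabs w <= Cabs z + Cabs (Csub z w).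
Proof.
  replace w with (Cadd z (Cmul (-1, 0) (Csub z w))) at 1 by (unfold Csub; C_ring).
  rewrite <- (Cabs_opp (Csub z w)). apply Cabs_triangle.
Qed.

Lemma Re_Csub z w : Re (Csub z w) = Re z - Re w.
Proof. unfold Csub. destruct_C. unfold_C. ring. Qed.

Lemma Im_Csub z w : Im (Csub z w) = Im z - Im w.
Proof. unfold Csub. destruct_C. unfold_C. ring. Qed.

Lemma inv_INR_lt t : 0 < t -> exists K : nat, / (INR K + 1) < t.
Proof.
  intros Ht. destruct (INR_archimed t 1 Ht) as [K HK]. exists K.
  pose proof (pos_INR K).
  apply (Rmult_lt_reg_l (INR K + 1)); [lra|]. rewrite Rinv_r by lra. nra.
Qed.

Lemma inv_INR_le_lt t K n : / (INR K + 1) < t -> (K <= n)%nat -> / (INR n + 1) < t.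
Proof.
  intros HK Hn. apply le_INR in Hn. pose proof (pos_INR K).
  eapply Rle_lt_trans; [|exact HK]. apply Rinv_le_contravar; lra.
Qed.

Lemma INR_gt r : exists n : nat, r < INR n.
Proof. destruct (INR_archimed 1 r) as [n Hn]; [lra|]. exists n. lra. Qed.

Definition cconv (u : nat -> C) (l : C) : Prop :=
  forall eps, 0 < eps -> exists N, forall n, (N <= n)%nat -> Cabs (Csub (u n) l) < eps.

Definition Clim (u : nat -> C) : C := epsilon (inhabits C0) (cconv u).

Lemma Clim_spec u : (exists l, cconv u l) -> cconv u (Clim u).
Proof. apply epsilon_spec. Qed.

Lemma cconv_unique u l l' : cconv u l -> cconv u l' -> l = l'.
Proof.
  intros H1 H2.
  assert (E : Csub l l' = C0).
  { apply Cabs_small_eq0. intros eps Heps.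
    destruct (H1 (eps/2)) as [N1 HN1]; [lra|]. destruct (H2 (eps/2)) as [N2 HN2]; [lra|].
    specialize (HN1 (N1 + N2)%nat ltac:(lia)). specialize (HN2 (N1 + N2)%nat ltac:(lia)).
    pose proof (Cabs_Csub_triangle l (u (N1 + N2)%nat) l').
    rewrite (Cabs_Csub_sym l (u _)) in H. lra. }
  destruct l, l'. unfold Csub in E. unfold_C. injection E; intros. f_equal; lra.
Qed.

Lemma cconv_ext u v l : (forall n, u n = v n) -> cconv u l -> cconv v l.
Proof. intros E H eps Heps. destruct (H eps Heps) as [N HN]. exists N. intros. rewrite <- E. auto. Qed.

Lemma cconv_add u v l l' : cconv u l -> cconv v l' ->
  cconv (fun n => Cadd (u n) (v n)) (Cadd l l').
Proof.
  intros H1 H2 eps Heps.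
  destruct (H1 (eps/2)) as [N1 HN1]; [lra|]. destruct (H2 (eps/2)) as [N2 HN2]; [lra|].
  exists (N1 + N2)%nat. intros n Hn.
  specialize (HN1 n ltac:(lia)). specialize (HN2 n ltac:(lia)).
  replace (Csub (Cadd (u n) (v n)) (Cadd l l')) with (Cadd (Csub (u n) l) (Csub (v n) l'))
    by (unfold Csub; C_ring).
  pose proof (Cabs_triangle (Csub (u n) l) (Csub (v n) l')). lra.
Qed.

Lemma cconv_mul u l c : cconv u l -> cconv (fun n => Cmul c (u n)) (Cmul c l).
Proof.
  intros H eps Heps. pose proof (Cabs_nonneg c).
  destruct (H (eps / (Cabs c + 1))) as [N HN]; [apply Rdiv_lt_0_compat; lra|].
  exists N. intros n Hn. specialize (HN n Hn).
  replace (Csub (Cmul c (u n)) (Cmul c l)) with (Cmul c (Csub (u n) l)) by (unfold Csub; C_ring).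
  rewrite Cabs_mul. pose proof (Cabs_nonneg (Csub (u n) l)).
  apply Rle_lt_trans with ((Cabs c + 1) * Cabs (Csub (u n) l)); [nra|].
  replace eps with ((Cabs c + 1) * (eps / (Cabs c + 1))) by (field; lra).
  apply Rmult_lt_compat_l; lra.
Qed.

Lemma cconv_Cabs u l : cconv u l -> Un_cv (fun n => Cabs (u n)) (Cabs l).
Proof.
  intros H eps Heps. destruct (H eps Heps) as [N HN]. exists N. intros n Hn.
  specialize (HN n Hn). unfold Rdist. apply Rabs_def1.
  - pose proof (Cabs_le_Csub l (u n)). rewrite Cabs_Csub_sym in H0. lra.
  - pose proof (Cabs_le_Csub (u n) l). lra.
Qed.

Lemma Un_cv_const r : Un_cv (fun _ => r) r.
Proof. intros eps Heps. exists O. intros. unfold Rdist. rewrite Rminus_diag, Rabs_R0. auto. Qed.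

Lemma Cnonneg_closed z : (forall eps, 0 < eps -> exists u, Cnonneg u /\ Cabs (Csub u z) < eps) ->
  Cnonneg z.
Proof.
  intros H. split.
  - destruct (Req_dec (Im z) 0) as [E|E]; auto. exfalso.
    destruct (H (Rabs (Im z)) (Rabs_pos_lt _ E)) as [u [[Hu _] Huz]].
    pose proof (Cabs_Im (Csub u z)). rewrite Im_Csub, Hu, Rminus_0_l, Rabs_Ropp in H0. lra.
  - apply Rnot_lt_le. intros Hneg.
    destruct (H (- Re z)) as [u [[_ Hu] Huz]]; [lra|].
    pose proof (Cabs_Re (Csub u z)). rewrite Re_Csub in H0.
    pose proof (Rle_abs (Re u - Re z)). lra.
Qed.

Lemma cconv_nonneg u l : (forall n, Cnonneg (u n)) -> cconv u l -> Cnonneg l.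
Proof.
  intros Hu H. apply Cnonneg_closed. intros eps Heps.
  destruct (H eps Heps) as [N HN]. exists (u N). auto.
Qed.

Lemma cconv_complete u :
  (forall eps, 0 < eps -> exists N, forall n m, (N <= n)%nat -> (N <= m)%nat ->
     Cabs (Csub (u n) (u m)) < eps) ->
  exists l, cconv u l.
Proof.
  intros H.
  assert (Hre : Cauchy_crit (fun n => Re (u n))).
  { intros eps Heps. destruct (H eps Heps) as [N HN]. exists N. intros n m Hn Hm.
    unfold Rdist. rewrite <- Re_Csub. eapply Rle_lt_trans; [apply Cabs_Re|]. auto. }
  assert (Him : Cauchy_crit (fun n => Im (u n))).
  { intros eps Heps. destruct (H eps Heps) as [N HN]. exists N. intros n m Hn Hm.
    unfold Rdist. rewrite <- Im_Csub. eapply Rle_lt_trans; [apply Cabs_Im|]. auto. }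
  destruct (R_complete _ Hre) as [x Hx], (R_complete _ Him) as [y Hy].
  exists (x, y). intros eps Heps.
  destruct (Hx (eps/2)) as [N1 HN1]; [lra|]. destruct (Hy (eps/2)) as [N2 HN2]; [lra|].
  exists (N1 + N2)%nat. intros n Hn.
  specialize (HN1 n ltac:(lia)). specialize (HN2 n ltac:(lia)). unfold Rdist in *.
  eapply Rle_lt_trans; [apply Cabs_le_sum|]. rewrite Re_Csub, Im_Csub. simpl. lra.
Qed.

Local Arguments add_assoc {_}. Local Arguments add_comm {_}. Local Arguments add_zero {_}.
Local Arguments add_opp {_}. Local Arguments scal_one {_}. Local Arguments scal_mul {_}.
Local Arguments scal_addl {_}. Local Arguments scal_addr {_}. Local Arguments A0_add {_}.
Local Arguments A0_scal {_}. Local Arguments A0_mul {_}. Local Arguments A0_star {_}.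
Local Arguments mul_addl_r {_}. Local Arguments mul_addr_r {_}. Local Arguments mul_scal_r {_}.
Local Arguments mul_scalr_r {_}. Local Arguments mul_addr_l {_}.
Local Arguments mul_scal_l {_}. Local Arguments mul_assoc_mid {_}.
Local Arguments mul_assoc_r {_}. Local Arguments mul_assoc_l {_}. Local Arguments star_add {_}.
Local Arguments star_scal {_}. Local Arguments star_star {_}. Local Arguments star_mul {_}.
Local Arguments norm_nonneg {_}. Local Arguments norm_eq0 {_}. Local Arguments norm_scal {_}.
Local Arguments norm_triangle {_}. Local Arguments norm_star {_}. Local Arguments A0_dense {_}.
Local Arguments mul_r_cont {_}. Local Arguments complete {_}. Local Arguments sub {_}.

Section QuasiStarAlgebra.
Variable Q : BanachQSA.
Implicit Types a b c d x y : Q.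

Lemma add_zero_l a : add zero a = a.
Proof. rewrite add_comm. apply add_zero. Qed.

Lemma add_opp_l a : add (opp a) a = zero.
Proof. rewrite add_comm. apply add_opp. Qed.

Lemma add_cancel_l a b c : add a b = add a c -> b = c.
Proof.
  intros H. rewrite <- (add_zero_l b), <- (add_zero_l c), <- (add_opp_l a).
  rewrite <- !add_assoc, H. reflexivity.
Qed.

Lemma opp_unique a b : add a b = zero -> b = opp a.
Proof. intros H. apply (add_cancel_l a). rewrite H, add_opp. reflexivity. Qed.

Lemma scal_C0 a : scal C0 a = zero.
Proof.
  apply (add_cancel_l (scal C0 a)). rewrite add_zero, <- scal_addl.
  f_equal. unfold_C. f_equal; ring.
Qed.

Lemma opp_scal a : opp a = scal (-1, 0) a.
Proof.
  symmetry. apply opp_unique. rewrite <- (scal_one a) at 1. rewrite <- scal_addl.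
  replace (Cadd C1 (-1, 0)) with C0 by (unfold_C; f_equal; ring). apply scal_C0.
Qed.

Lemma opp_opp a : opp (opp a) = a.
Proof. symmetry. apply opp_unique. apply add_opp_l. Qed.

Lemma opp_add a b : opp (add a b) = add (opp a) (opp b).
Proof. rewrite !opp_scal. apply scal_addr. Qed.

Lemma sub_add_sub a b c : add (sub a b) (sub b c) = sub a c.
Proof.
  unfold sub. rewrite <- add_assoc. f_equal. rewrite add_assoc, add_opp_l. apply add_zero_l.
Qed.

Lemma opp_sub a b : opp (sub a b) = sub b a.
Proof. unfold sub. rewrite opp_add, opp_opp. apply add_comm. Qed.

Lemma sub_add_add a b c d : sub (add a b) (add c d) = add (sub a c) (sub b d).
Proof.
  unfold sub. rewrite opp_add, !add_assoc. f_equal.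
  rewrite <- !add_assoc. f_equal. apply add_comm.
Qed.

Lemma add_sub_cancel a b : add b (sub a b) = a.
Proof. unfold sub. rewrite add_comm, <- add_assoc, add_opp_l. apply add_zero. Qed.

Lemma add_sub_cancel_l c h : sub (add c h) c = h.
Proof. unfold sub. rewrite (add_comm c h), <- add_assoc, add_opp. apply add_zero. Qed.

Lemma scal_sub l a b : scal l (sub a b) = sub (scal l a) (scal l b).
Proof.
  unfold sub. rewrite scal_addr, !opp_scal, <- !scal_mul. do 2 f_equal. C_ring.
Qed.

Lemma norm_zero : norm (zero : Q) = 0.
Proof. rewrite <- (scal_C0 zero), norm_scal, Cabs_zero. ring. Qed.

Lemma norm_opp a : norm (opp a) = norm a.
Proof. rewrite opp_scal, norm_scal, Cabs_real, Rabs_left by lra. ring. Qed.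

Lemma norm_sub_sym a b : norm (sub a b) = norm (sub b a).
Proof. rewrite <- opp_sub, norm_opp. reflexivity. Qed.

Lemma norm_sub_triangle a b c : norm (sub a c) <= norm (sub a b) + norm (sub b c).
Proof. rewrite <- (sub_add_sub a b c). apply norm_triangle. Qed.

Lemma norm_le_sub a b : norm a <= norm b + norm (sub a b).
Proof. rewrite <- (add_sub_cancel a b) at 1. apply norm_triangle. Qed.

Lemma A0_opp x : A0 x -> A0 (opp x).
Proof. intros. rewrite opp_scal. apply A0_scal; auto. Qed.

Lemma A0_sub x y : A0 x -> A0 y -> A0 (sub x y).
Proof. intros. apply A0_add; auto. apply A0_opp; auto. Qed.

Lemma mul_zero_l x : A0 x -> mul zero x = zero.
Proof. intros. rewrite <- (scal_C0 zero) at 1. rewrite mul_scal_r, scal_C0; auto. Qed.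

Lemma mul_sub_l a b x : A0 x -> mul (sub a b) x = sub (mul a x) (mul b x).
Proof. intros. unfold sub. rewrite mul_addl_r, !opp_scal, mul_scal_r; auto. Qed.

Lemma mul_sub_r a x y : A0 x -> A0 y -> mul a (sub x y) = sub (mul a x) (mul a y).
Proof.
  intros. unfold sub. rewrite mul_addr_r, !opp_scal, mul_scalr_r; auto using A0_opp.
Qed.

Lemma star_zero : star (zero : Q) = zero.
Proof.
  rewrite <- (scal_C0 zero) at 1. rewrite star_scal.
  replace (Cconj C0) with C0 by (unfold_C; f_equal; ring). apply scal_C0.
Qed.

Lemma star_sub a b : star (sub a b) = sub (star a) (star b).
Proof.
  unfold sub. rewrite star_add, !opp_scal, star_scal. do 2 f_equal. unfold_C. f_equal; ring.
Qed.

Lemma norm_star_sub a b : norm (sub (star a) (star b)) = norm (sub a b).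
Proof. rewrite <- star_sub, norm_star. reflexivity. Qed.

Lemma star_mul_l y b : A0 y -> star (mul y b) = mul (star b) (star y).
Proof.
  intros Hy. rewrite <- (star_star b) at 1. rewrite <- (star_star y) at 1.
  rewrite <- star_mul by (apply A0_star; auto). apply star_star.
Qed.

Lemma unit_star e : is_unit Q e -> star e = e.
Proof.
  intros [He H].
  assert (E : star (mul e (star e)) = mul e (star e))
    by (rewrite star_mul, star_star; auto using A0_star).
  rewrite (proj2 (H (star e))), star_star in E. auto.
Qed.

Lemma mul_l_cont y : A0 y -> forall a eps, 0 < eps ->
  exists delta, 0 < delta /\ forall b, norm (sub b a) < delta ->
    norm (sub (mul y b) (mul y a)) < eps.
Proof.
  intros Hy a eps Heps.
  destruct (mul_r_cont (star y) (A0_star _ Hy) (star a) eps Heps) as [d [Hd H]].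
  exists d. split; auto. intros b Hb.
  rewrite <- norm_star_sub, !star_mul_l by auto.
  apply H. fold (sub (star b) (star a)). rewrite norm_star_sub. auto.
Qed.

End QuasiStarAlgebra.

Section Convergence.
Variable Q : BanachQSA.
Implicit Types a b x y : Q.

Definition conv (u : nat -> Q) (a : Q) : Prop :=
  forall eps, 0 < eps -> exists N, forall n, (N <= n)%nat -> norm (sub (u n) a) < eps.

Definition approx (a : Q) (n : nat) : Q :=
  proj1_sig (constructive_indefinite_description _ (A0_dense a (/ (INR n + 1)) (RinvN_pos n))).

Lemma approx_spec a n : A0 (approx a n) /\ norm (sub a (approx a n)) < / (INR n + 1).
Proof. unfold approx. destruct (constructive_indefinite_description _ _) as [x Hx]. exact Hx. Qed.

Lemma approx_A0 a n : A0 (approx a n).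
Proof. apply approx_spec. Qed.

Lemma conv_approx a : conv (approx a) a.
Proof.
  intros eps Heps. destruct (inv_INR_lt eps Heps) as [K HK]. exists K. intros n Hn.
  rewrite norm_sub_sym. eapply Rlt_trans; [apply approx_spec|]. eapply inv_INR_le_lt; eauto.
Qed.

Lemma conv_const a : conv (fun _ => a) a.
Proof. intros eps Heps. exists O. intros. unfold sub. rewrite add_opp, norm_zero. auto. Qed.

Lemma conv_add u v a b : conv u a -> conv v b -> conv (fun n => add (u n) (v n)) (add a b).
Proof.
  intros H1 H2 eps Heps.
  destruct (H1 (eps/2)) as [N1 HN1]; [lra|]. destruct (H2 (eps/2)) as [N2 HN2]; [lra|].
  exists (N1 + N2)%nat. intros n Hn.
  specialize (HN1 n ltac:(lia)). specialize (HN2 n ltac:(lia)).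
  rewrite sub_add_add. pose proof (norm_triangle (sub (u n) a) (sub (v n) b)). lra.
Qed.

Lemma conv_scal u a l : conv u a -> conv (fun n => scal l (u n)) (scal l a).
Proof.
  intros H eps Heps. pose proof (Cabs_nonneg l).
  destruct (H (eps / (Cabs l + 1))) as [N HN]; [apply Rdiv_lt_0_compat; lra|].
  exists N. intros n Hn. specialize (HN n Hn).
  rewrite <- scal_sub, norm_scal. pose proof (norm_nonneg (sub (u n) a)).
  apply Rle_lt_trans with ((Cabs l + 1) * norm (sub (u n) a)); [nra|].
  replace eps with ((Cabs l + 1) * (eps / (Cabs l + 1))) by (field; lra).
  apply Rmult_lt_compat_l; lra.
Qed.

Lemma conv_star u a : conv u a -> conv (fun n => star (u n)) (star a).
Proof. intros H eps Heps. destruct (H eps Heps) as [N HN]. exists N. intros. rewrite norm_star_sub. auto. Qed.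

Lemma conv_mul_r u a x : A0 x -> conv u a -> conv (fun n => mul (u n) x) (mul a x).
Proof.
  intros Hx H eps Heps. destruct (mul_r_cont x Hx a eps Heps) as [d [Hd Hdd]].
  destruct (H d Hd) as [N HN]. exists N. intros n Hn. apply Hdd, HN. auto.
Qed.

Lemma conv_mul_l u a y : A0 y -> conv u a -> conv (fun n => mul y (u n)) (mul y a).
Proof.
  intros Hy H eps Heps. destruct (mul_l_cont Q y Hy a eps Heps) as [d [Hd Hdd]].
  destruct (H d Hd) as [N HN]. exists N. intros n Hn. apply Hdd, HN. auto.
Qed.

Lemma conv_norm u a : conv u a -> Un_cv (fun n => norm (u n)) (norm a).
Proof.
  intros H eps Heps. destruct (H eps Heps) as [N HN]. exists N. intros n Hn.
  specialize (HN n Hn). pose proof (norm_le_sub Q (u n) a). pose proof (norm_le_sub Q a (u n)).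
  rewrite norm_sub_sym in H1. unfold Rdist. apply Rabs_def1; lra.
Qed.

Lemma conv_close u v a : conv u a -> conv v a -> forall eps, 0 < eps ->
  exists N, forall n m, (N <= n)%nat -> (N <= m)%nat -> norm (sub (u n) (v m)) < eps.
Proof.
  intros Hu Hv eps Heps.
  destruct (Hu (eps/2)) as [N1 HN1]; [lra|]. destruct (Hv (eps/2)) as [N2 HN2]; [lra|].
  exists (N1 + N2)%nat. intros n m Hn Hm.
  specialize (HN1 n ltac:(lia)). specialize (HN2 m ltac:(lia)).
  pose proof (norm_sub_triangle Q (u n) a (v m)). rewrite (norm_sub_sym Q a) in H. lra.
Qed.

Lemma conv_cconv (w : Q -> C) u a : norm_continuous Q w -> conv u a ->
  cconv (fun n => w (u n)) (w a).
Proof.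
  intros Hc H eps Heps. destruct (Hc a eps Heps) as [d [Hd Hdd]].
  destruct (H d Hd) as [N HN]. exists N. intros n Hn. apply Hdd, HN. auto.
Qed.

End Convergence.

Section HermitianForms.
Variable Q : BanachQSA.
Implicit Types a b c : Q.
Variable Om : Q -> Q -> C.
Hypothesis Om_addl : forall a b c, Om (add a b) c = Cadd (Om a c) (Om b c).
Hypothesis Om_scall : forall l a c, Om (scal l a) c = Cmul l (Om a c).
Hypothesis Om_addr : forall a b c, Om a (add b c) = Cadd (Om a b) (Om a c).
Hypothesis Om_scalr : forall l a c, Om a (scal l c) = Cmul (Cconj l) (Om a c).
Hypothesis Om_pos : forall a, Cnonneg (Om a a).

Lemma form_subl a b c : Om (sub a b) c = Csub (Om a c) (Om b c).
Proof. unfold sub, Csub. rewrite Om_addl, opp_scal, Om_scall. reflexivity. Qed.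

Lemma form_subr a b c : Om c (sub a b) = Csub (Om c a) (Om c b).
Proof.
  unfold sub, Csub. rewrite Om_addr, opp_scal, Om_scalr. f_equal. f_equal. unfold_C. f_equal; ring.
Qed.

Lemma form_expand a b l : Om (add a (scal l b)) (add a (scal l b)) =
  Cadd (Cadd (Om a a) (Cmul (Cconj l) (Om a b)))
       (Cadd (Cmul l (Om b a)) (Cmul l (Cmul (Cconj l) (Om b b)))).
Proof. rewrite Om_addl, !Om_addr, !Om_scall, !Om_scalr. reflexivity. Qed.

Lemma form_herm a b : Om b a = Cconj (Om a b).
Proof.
  pose proof (Om_pos (add a (scal C1 b))) as P1.
  pose proof (Om_pos (add a (scal (0, 1) b))) as P2.
  rewrite form_expand in P1, P2.
  pose proof (Om_pos a) as Pa. pose proof (Om_pos b) as Pb.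
  destruct (Om a a), (Om b b), (Om a b), (Om b a).
  unfold_C. destruct P1 as [P1 _], P2 as [P2 _], Pa as [Pa _], Pb as [Pb _].
  f_equal; nra.
Qed.

Lemma form_Cauchy_Schwarz a b : Cabs (Om a b) <= sqrt (Re (Om a a)) * sqrt (Re (Om b b)).
Proof.
  (* positivity of Om (a - t (Om a b) b) for real t, a quadratic in t *)
  assert (Hq : forall t, 0 <= Re (Om a a) - 2 * t * (Re (Om a b) * Re (Om a b) + Im (Om a b) * Im (Om a b))
       + t * t * (Re (Om a b) * Re (Om a b) + Im (Om a b) * Im (Om a b)) * Re (Om b b)).
  { intros t. pose proof (Om_pos (add a (scal (Cmul (-t, 0) (Om a b)) b))) as P.
    rewrite form_expand, (form_herm a b) in P.
    pose proof (Om_pos a) as Pa. pose proof (Om_pos b) as Pb.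
    destruct (Om a a), (Om b b), (Om a b). unfold_C.
    destruct P as [_ P], Pa as [Pa _], Pb as [Pb _]. subst. nra. }
  destruct (Om_pos a) as [_ HA], (Om_pos b) as [_ HB].
  set (A := Re (Om a a)) in *. set (B := Re (Om b b)) in *.
  set (s := Re (Om a b) * Re (Om a b) + Im (Om a b) * Im (Om a b)) in *.
  assert (Hs : 0 <= s) by (unfold s; nra).
  assert (Hle : s <= A * B).
  { destruct (Rle_lt_or_eq_dec 0 B HB) as [Bp|B0].
    - specialize (Hq (/ B)).
      replace (/ B * / B * s * B) with (s * / B) in Hq by (field; lra).
      assert (H : 0 <= (A - s * / B) * B) by (apply Rmult_le_pos; lra).
      replace ((A - s * / B) * B) with (A * B - s) in H by (field; lra). lra.
    - rewrite <- B0 in Hq |- *.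
      destruct (Rle_lt_or_eq_dec 0 s Hs) as [sp|s0]; [|lra].
      specialize (Hq ((A + 1) / (2 * s))).
      replace (2 * ((A + 1) / (2 * s)) * s) with (A + 1) in Hq by (field; lra). lra. }
  unfold Cabs. rewrite <- sqrt_mult by auto. apply sqrt_le_1_alt. exact Hle.
Qed.

Lemma form_diag_zero a b : Re (Om a a) = 0 -> Om a b = C0.
Proof.
  intros H. apply Cabs_eq0. pose proof (form_Cauchy_Schwarz a b). rewrite H, sqrt_0 in H0.
  pose proof (Cabs_nonneg (Om a b)). lra.
Qed.

End HermitianForms.

Section Baire.
Variable Q : BanachQSA.
Variable P : nat -> Q -> Prop.
Hypothesis P_closed : forall n b, ~ P n b ->
  exists d, 0 < d /\ forall b', norm (sub b' b) < d -> ~ P n b'.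
Hypothesis P_no_interior : forall n c r, 0 < r -> exists b, norm (sub b c) < r /\ ~ P n b.

Definition ball_avoids (n : nat) (c : Q) (r : R) : Prop :=
  0 < r /\ forall b, norm (sub b c) < r -> ~ P n b.

Lemma ball_avoids_inside n c r t : 0 < r -> 0 < t ->
  exists c' r', ball_avoids n c' r' /\ r' <= r / 4 /\ r' <= t /\ norm (sub c' c) < r / 2.
Proof.
  intros Hr Ht. destruct (P_no_interior n c (r / 2)) as [b [Hb HPb]]; [lra|].
  destruct (P_closed n b HPb) as [d [Hd Hdd]].
  exists b, (Rmin d (Rmin (r / 4) t)).
  pose proof (Rmin_l d (Rmin (r / 4) t)). pose proof (Rmin_r d (Rmin (r / 4) t)).
  pose proof (Rmin_l (r / 4) t). pose proof (Rmin_r (r / 4) t).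
  repeat split; try lra.
  - apply Rmin_pos; [lra|]. apply Rmin_pos; lra.
  - intros b' Hb'. apply Hdd. lra.
Qed.

Lemma nested_avoiding_balls : exists (c : nat -> Q) (r : nat -> R), forall k,
  ball_avoids k (c k) (r k) /\ r (S k) <= r k / 4 /\ r (S k) <= / (INR k + 1) /\
  norm (sub (c (S k)) (c k)) < r k / 2.
Proof.
  assert (step : forall k (p : Q * R), exists p' : Q * R, 0 < snd p ->
    ball_avoids (S k) (fst p') (snd p') /\ snd p' <= snd p / 4 /\
    snd p' <= / (INR k + 1) /\ norm (sub (fst p') (fst p)) < snd p / 2).
  { intros k [c r]. destruct (Rlt_or_le 0 r) as [Hr|Hr].
    - destruct (ball_avoids_inside (S k) c r _ Hr (RinvN_pos k)) as [c' [r' H]].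
      exists (c', r'). auto.
    - exists (c, r). simpl. lra. }
  destruct (ball_avoids_inside 0 zero 1 1) as [c0 [r0 [H0 _]]]; [lra|lra|].
  set (f k p := proj1_sig (constructive_indefinite_description _ (step k p))).
  set (s := nat_rect (fun _ => (Q * R)%type) (c0, r0) f).
  assert (Hf : forall k, 0 < snd (s k) -> _) by (intros k; exact (proj2_sig
    (constructive_indefinite_description _ (step k (s k))))).
  assert (Hs : forall k, ball_avoids k (fst (s k)) (snd (s k))).
  { induction k; [exact H0|]. apply (Hf k (proj1 IHk)). }
  exists (fun k => fst (s k)), (fun k => snd (s k)). intros k. split; [apply Hs|].
  apply (Hf k (proj1 (Hs k))).
Qed.

Lemma nested_balls_limit (c : nat -> Q) (r : nat -> R) :
  (forall k, 0 < r k) -> (forall k, r (S k) <= r k / 4) -> (forall k, r (S k) <= / (INR k + 1)) ->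
  (forall k, norm (sub (c (S k)) (c k)) < r k / 2) ->
  exists l, forall n, norm (sub l (c n)) <= 2 / 3 * r n.
Proof.
  intros Hr Hr4 Hrk Hc.
  (* the tail of the sequence stays in the ball: r/2 + 2/3 (r/4) = 2/3 r *)
  assert (Htail : forall j n, norm (sub (c (n + j)%nat) (c n)) <= 2 / 3 * r n).
  { induction j; intros n.
    - rewrite Nat.add_0_r. unfold sub. rewrite add_opp, norm_zero. specialize (Hr n). lra.
    - rewrite <- plus_n_Sm.
      pose proof (norm_sub_triangle Q (c (S n + j)%nat) (c (S n)) (c n)).
      specialize (IHj (S n)). specialize (Hr4 n). specialize (Hc n). simpl in *. lra. }
  assert (Hcauchy : forall eps, 0 < eps -> exists N, forall n m, (N <= n)%nat -> (N <= m)%nat ->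
        norm (add (c n) (opp (c m))) < eps).
  { intros eps Heps. destruct (inv_INR_lt (3 / 4 * eps)) as [K HK]; [lra|].
    exists (S K). intros n m Hn Hm.
    pose proof (Htail (n - S K)%nat (S K)) as Dn. pose proof (Htail (m - S K)%nat (S K)) as Dm.
    replace (S K + (n - S K))%nat with n in Dn by lia.
    replace (S K + (m - S K))%nat with m in Dm by lia.
    pose proof (norm_sub_triangle Q (c n) (c (S K)) (c m)).
    rewrite (norm_sub_sym Q (c (S K)) (c m)) in H. specialize (Hrk K).
    fold (sub (c n) (c m)). lra. }
  destruct (complete c Hcauchy) as [l Hl]. exists l. intros n.
  apply Rle_plus_epsilon. intros eps Heps. destruct (Hl eps Heps) as [N HN].
  specialize (HN (N + n)%nat ltac:(lia)). specialize (Htail N n).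
  replace (n + N)%nat with (N + n)%nat in Htail by lia.
  pose proof (norm_sub_triangle Q l (c (N + n)%nat) (c n)).
  rewrite (norm_sub_sym Q l (c (N + n)%nat)) in H. fold (sub (c (N + n)%nat) l) in HN. lra.
Qed.

Lemma baire_point : exists l, forall n, ~ P n l.
Proof.
  destruct nested_avoiding_balls as [c [r H]].
  destruct (nested_balls_limit c r) as [l Hl]; try (intros k; apply H).
  exists l. intros n. apply (proj2 (proj1 (H n))). specialize (Hl n).
  pose proof (proj1 (proj1 (H n))). lra.
Qed.

End Baire.

Lemma baire (Q : BanachQSA) (P : nat -> Q -> Prop) :
  (forall n b, ~ P n b -> exists d, 0 < d /\ forall b', norm (sub b' b) < d -> ~ P n b') ->
  (forall b, exists n, P n b) ->
  exists n c r, 0 < r /\ forall b, norm (sub b c) < r -> P n b.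
Proof.
  intros Hclosed Hcover. apply NNPP. intros Hno.
  destruct (baire_point Q P Hclosed) as [l Hl].
  - intros n c r Hr. apply NNPP. intros Hb. apply Hno. exists n, c, r. split; auto.
    intros b Hbr. apply NNPP. intros HnP. apply Hb. exists b. auto.
  - destruct (Hcover l) as [n Hn]. exact (Hl n Hn).
Qed.

Section LinearFunctional.
Variable Q : BanachQSA.
Variable w : Q -> C.
Hypothesis w_lin : linear_functional Q w.

Lemma lin_add a b : w (add a b) = Cadd (w a) (w b).
Proof. apply (proj1 w_lin). Qed.

Lemma lin_scal l a : w (scal l a) = Cmul l (w a).
Proof. apply (proj2 w_lin). Qed.

Lemma lin_zero : w zero = C0.
Proof. rewrite <- (scal_C0 Q zero), lin_scal. C_ring. Qed.

Lemma lin_sub a b : w (sub a b) = Csub (w a) (w b).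
Proof. unfold sub, Csub. rewrite lin_add, opp_scal, lin_scal. reflexivity. Qed.

End LinearFunctional.

Section UniformL3.
Variable Q : BanachQSA.
Implicit Types a b x : Q.
Variable w : Q -> C.
Hypothesis w_lin : linear_functional Q w.
Hypothesis w_cont : norm_continuous Q w.
Hypothesis w_L1 : forall x, A0 x -> Cnonneg (w (mul (star x) x)).
Hypothesis w_L3 : forall a, exists g, 0 < g /\ forall x, A0 x ->
  Cabs (w (mul (star a) x)) <= g * sqrt (Re (w (mul (star x) x))).

Definition gamma_bound a M : Prop := forall x, A0 x ->
  Cabs (w (mul (star a) x)) <= M * sqrt (Re (w (mul (star x) x))).

Lemma gamma_bound_le a M N : M <= N -> gamma_bound a M -> gamma_bound a N.
Proof.
  intros HMN H x Hx. specialize (H x Hx).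
  pose proof (sqrt_pos (Re (w (mul (star x) x)))). nra.
Qed.

Lemma gamma_bound_add a b M N : gamma_bound a M -> gamma_bound b N -> gamma_bound (add a b) (M + N).
Proof.
  intros Ha Hb x Hx. rewrite star_add, mul_addl_r, (lin_add Q w w_lin) by auto.
  eapply Rle_trans; [apply Cabs_triangle|].
  specialize (Ha x Hx); specialize (Hb x Hx). lra.
Qed.

Lemma gamma_bound_scal a M l : gamma_bound a M -> gamma_bound (scal l a) (Cabs l * M).
Proof.
  intros Ha x Hx.
  rewrite star_scal, mul_scal_r, (lin_scal Q w w_lin), Cabs_mul, Cabs_conj by auto.
  rewrite Rmult_assoc. apply Rmult_le_compat_l; auto using Cabs_nonneg.
Qed.

Lemma gamma_bound_zero : gamma_bound zero 0.
Proof.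
  intros x Hx. rewrite star_zero, mul_zero_l, (lin_zero Q w w_lin), Cabs_zero by auto. lra.
Qed.

Lemma not_gamma_bound_open b M : ~ gamma_bound b M ->
  exists d, 0 < d /\ forall b', norm (sub b' b) < d -> ~ gamma_bound b' M.
Proof.
  intros H. apply not_all_ex_not in H. destruct H as [x Hx].
  apply imply_to_and in Hx. destruct Hx as [Hx Hgt]. apply Rnot_le_lt in Hgt.
  set (s := M * sqrt (Re (w (mul (star x) x)))) in *.
  set (eps := Cabs (w (mul (star b) x)) - s).
  destruct (w_cont (mul (star b) x) eps) as [d1 [Hd1 H1]]; [unfold eps; lra|].
  destruct (mul_r_cont x Hx (star b) d1 Hd1) as [d2 [Hd2 H2]].
  exists d2. split; auto. intros b' Hb' HB.
  specialize (HB x Hx). fold s in HB.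
  assert (Hn : norm (sub (mul (star b') x) (mul (star b) x)) < d1).
  { apply H2. fold (sub (star b') (star b)). rewrite norm_star_sub. auto. }
  specialize (H1 _ Hn).
  pose proof (Cabs_le_Csub (w (mul (star b') x)) (w (mul (star b) x))).
  unfold Csub in *. unfold eps in *. lra.
Qed.

Lemma gamma_bound_near_zero : exists N r, 0 <= N /\ 0 < r /\ forall h, norm h < r -> gamma_bound h N.
Proof.
  destruct (baire Q (fun n b => gamma_bound b (INR n))) as [n [c [r [Hr Hb]]]].
  - intros n b. apply not_gamma_bound_open.
  - intros b. destruct (w_L3 b) as [g [_ Hg]]. destruct (INR_gt g) as [n Hn].
    exists n. apply (gamma_bound_le b g); [lra|exact Hg].
  - exists (INR n + INR n), r. split; [pose proof (pos_INR n); lra|]. split; auto. intros h Hh.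
    replace h with (add (add c h) (opp c)) by apply add_sub_cancel_l.
    apply gamma_bound_add.
    + apply Hb. rewrite add_sub_cancel_l. auto.
    + rewrite opp_scal. apply (gamma_bound_le _ (Cabs (-1, 0) * INR n)).
      * rewrite Cabs_real, Rabs_left by lra. lra.
      * apply gamma_bound_scal, Hb. unfold sub. rewrite add_opp, norm_zero. auto.
Qed.

Lemma gamma_bound_linear : exists K, 0 <= K /\ forall a, gamma_bound a (K * norm a).
Proof.
  destruct gamma_bound_near_zero as [N [r [HN [Hr Hh]]]].
  exists (2 * N / r). split.
  { apply Rmult_le_pos; [lra|]. left; apply Rinv_0_lt_compat; auto. }
  intros a. destruct (Req_dec (norm a) 0) as [Ha|Ha].
  - rewrite Ha, (norm_eq0 a Ha). apply (gamma_bound_le _ 0); [right; ring|]. apply gamma_bound_zero.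
  - pose proof (norm_nonneg a) as Hna.
    set (t := r / (2 * norm a)).
    assert (Ht : 0 < t) by (unfold t; apply Rdiv_lt_0_compat; lra).
    assert (Hta : gamma_bound (scal (t, 0) a) N).
    { apply Hh. rewrite norm_scal, Cabs_real, Rabs_right by lra. unfold t. field_simplify; lra. }
    replace a with (scal (/ t, 0) (scal (t, 0) a)) at 1.
    + apply (gamma_bound_le _ (Cabs (/ t, 0) * N)); [|apply gamma_bound_scal; auto].
      rewrite Cabs_real, Rabs_right by (left; apply Rinv_0_lt_compat; auto).
      right. unfold t. field. lra.
    + rewrite <- scal_mul. replace (Cmul (/ t, 0) (t, 0)) with C1; [apply scal_one|].
      unfold_C. f_equal; [rewrite Rinv_l by lra|]; ring.
Qed.

Lemma sqrt_diag_le x M : A0 x -> 0 <= M -> gamma_bound x M -> sqrt (Re (w (mul (star x) x))) <= M.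
Proof.
  intros Hx HM HB. specialize (HB x Hx). destruct (w_L1 x Hx) as [_ Hre].
  set (t := Re (w (mul (star x) x))) in *.
  pose proof (Cabs_Re (w (mul (star x) x))). fold t in H. rewrite Rabs_right in H by lra.
  pose proof (sqrt_sqrt t Hre). pose proof (sqrt_pos t).
  destruct (Req_dec (sqrt t) 0) as [E|E].
  - lra.
  - apply (Rmult_le_reg_r (sqrt t)); lra.
Qed.

Lemma form_bounded : exists M, 0 < M /\
  forall a x, A0 x -> Cabs (w (mul (star a) x)) <= M * norm a * norm x.
Proof.
  destruct gamma_bound_linear as [K [HK HB]]. exists (K * K + 1). split; [nra|].
  intros a x Hx. pose proof (norm_nonneg a). pose proof (norm_nonneg x).
  eapply Rle_trans; [apply (HB a x Hx)|].
  assert (sqrt (Re (w (mul (star x) x))) <= K * norm x) by (apply sqrt_diag_le; auto; nra).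
  assert (0 <= K * norm a) by nra. nra.
Qed.

End UniformL3.

Section FormExtension.
Variable Q : BanachQSA.
Implicit Types a b c x y : Q.
Variable w : Q -> C.
Hypothesis w_lin : linear_functional Q w.
Hypothesis w_cont : norm_continuous Q w.
Hypothesis w_L1 : forall x, A0 x -> Cnonneg (w (mul (star x) x)).
Variable M : R.
Hypothesis M_pos : 0 < M.
Hypothesis w_bounded : forall a x, A0 x -> Cabs (w (mul (star a) x)) <= M * norm a * norm x.

Definition phi x y : C := w (mul (star y) x).

Lemma phi_diff x x' y y' : A0 x -> A0 x' -> A0 y -> A0 y' ->
  Cabs (Csub (phi x y) (phi x' y')) <=
  M * norm (sub x x') * norm y + M * norm (sub y y') * norm x'.
Proof.
  intros Hx Hx' Hy Hy'.
  replace (Csub (phi x y) (phi x' y')) with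
    (Cadd (Csub (phi x y) (phi x' y)) (Csub (phi x' y) (phi x' y'))) by (unfold Csub; C_ring).
  eapply Rle_trans; [apply Cabs_triangle|]. unfold phi.
  rewrite <- !(lin_sub Q w w_lin), <- mul_sub_r, <- mul_sub_l, <- star_sub by auto.
  pose proof (w_bounded y (sub x x') (A0_sub Q x x' Hx Hx')).
  pose proof (w_bounded (sub y y') x' Hx'). lra.
Qed.

Lemma conv_norm_le u a : conv Q u a -> exists N, forall n, (N <= n)%nat -> norm (u n) <= norm a + 1.
Proof.
  intros H. destruct (H 1) as [N HN]; [lra|]. exists N. intros n Hn.
  specialize (HN n Hn). pose proof (norm_le_sub Q (u n) a). lra.
Qed.

Lemma phi_conv_close (xs ys xs' ys' : nat -> Q) a b :
  (forall n, A0 (xs n)) -> (forall n, A0 (ys n)) -> (forall n, A0 (xs' n)) -> (forall n, A0 (ys' n)) ->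
  conv Q xs a -> conv Q ys b -> conv Q xs' a -> conv Q ys' b ->
  forall eps, 0 < eps -> exists N, forall n m, (N <= n)%nat -> (N <= m)%nat ->
    Cabs (Csub (phi (xs n) (ys n)) (phi (xs' m) (ys' m))) < eps.
Proof.
  intros Hxs Hys Hxs' Hys' Cx Cy Cx' Cy' eps Heps.
  pose proof (norm_nonneg a). pose proof (norm_nonneg b).
  set (B := M * (norm a + norm b + 2)).
  assert (HB : 0 < B) by (unfold B; apply Rmult_lt_0_compat; lra).
  set (d := eps / (2 * B)).
  assert (Hd : 0 < d) by (unfold d; apply Rdiv_lt_0_compat; lra).
  destruct (conv_close Q xs xs' a Cx Cx' d Hd) as [N1 H1].
  destruct (conv_close Q ys ys' b Cy Cy' d Hd) as [N2 H2].
  destruct (conv_norm_le ys b Cy) as [N3 H3]. destruct (conv_norm_le xs' a Cx') as [N4 H4].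
  exists (N1 + N2 + N3 + N4)%nat. intros n m Hn Hm.
  specialize (H1 n m ltac:(lia) ltac:(lia)). specialize (H2 n m ltac:(lia) ltac:(lia)).
  specialize (H3 n ltac:(lia)). specialize (H4 m ltac:(lia)).
  eapply Rle_lt_trans; [apply phi_diff; auto|].
  pose proof (norm_nonneg (ys n)). pose proof (norm_nonneg (xs' m)).
  pose proof (norm_nonneg (sub (xs n) (xs' m))). pose proof (norm_nonneg (sub (ys n) (ys' m))).
  assert (E : d * B = eps / 2) by (unfold d; field; lra).
  assert (M * norm (sub (xs n) (xs' m)) * norm (ys n) <= M * d * (norm b + 1)).
  { rewrite !Rmult_assoc. apply Rmult_le_compat_l; [lra|]. apply Rmult_le_compat; lra. }
  assert (M * norm (sub (ys n) (ys' m)) * norm (xs' m) <= M * d * (norm a + 1)).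
  { rewrite !Rmult_assoc. apply Rmult_le_compat_l; [lra|]. apply Rmult_le_compat; lra. }
  unfold B in E. nra.
Qed.

Ltac A0_auto := auto using approx_A0, conv_approx, A0_add, A0_scal, A0_mul, A0_star, conv_const.

Definition ext_form a b : C := Clim (fun n => phi (approx Q a n) (approx Q b n)).

Lemma ext_form_limit (xs ys : nat -> Q) a b : (forall n, A0 (xs n)) -> (forall n, A0 (ys n)) ->
  conv Q xs a -> conv Q ys b -> cconv (fun n => phi (xs n) (ys n)) (ext_form a b).
Proof.
  intros Hxs Hys Cx Cy.
  assert (Happrox : cconv (fun n => phi (approx Q a n) (approx Q b n)) (ext_form a b)).
  { apply Clim_spec, cconv_complete, phi_conv_close with a b; A0_auto. }
  intros eps Heps.
  destruct (phi_conv_close xs ys (approx Q a) (approx Q b) a b) with (eps := eps / 2)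
    as [N1 HN1]; A0_auto; [lra|].
  destruct (Happrox (eps / 2)) as [N2 HN2]; [lra|].
  exists (N1 + N2)%nat. intros n Hn.
  specialize (HN1 n n ltac:(lia) ltac:(lia)). specialize (HN2 n ltac:(lia)).
  pose proof (Cabs_Csub_triangle (phi (xs n) (ys n)) (phi (approx Q a n) (approx Q b n))
    (ext_form a b)). lra.
Qed.

Lemma ext_form_addl a a' c : ext_form (add a a') c = Cadd (ext_form a c) (ext_form a' c).
Proof.
  eapply cconv_unique.
  - apply (ext_form_limit (fun n => add (approx Q a n) (approx Q a' n)) (approx Q c));
      A0_auto; apply conv_add; A0_auto.
  - eapply cconv_ext; [|apply cconv_add; apply ext_form_limit; A0_auto].
    intros n. unfold phi. rewrite mul_addr_l, (lin_add Q w w_lin); A0_auto.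
Qed.

Lemma ext_form_scall l a c : ext_form (scal l a) c = Cmul l (ext_form a c).
Proof.
  eapply cconv_unique.
  - apply (ext_form_limit (fun n => scal l (approx Q a n)) (approx Q c));
      A0_auto; apply conv_scal; A0_auto.
  - eapply cconv_ext; [|apply cconv_mul; apply ext_form_limit; A0_auto].
    intros n. unfold phi. rewrite mul_scal_l, (lin_scal Q w w_lin); A0_auto.
Qed.

Lemma ext_form_addr a b c : ext_form a (add b c) = Cadd (ext_form a b) (ext_form a c).
Proof.
  eapply cconv_unique.
  - apply (ext_form_limit (approx Q a) (fun n => add (approx Q b n) (approx Q c n)));
      A0_auto; apply conv_add; A0_auto.
  - eapply cconv_ext; [|apply cconv_add; apply ext_form_limit; A0_auto].
    intros n. unfold phi. rewrite star_add, mul_addl_r, (lin_add Q w w_lin); A0_auto.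
Qed.

Lemma ext_form_scalr l a c : ext_form a (scal l c) = Cmul (Cconj l) (ext_form a c).
Proof.
  eapply cconv_unique.
  - apply (ext_form_limit (approx Q a) (fun n => scal l (approx Q c n)));
      A0_auto; apply conv_scal; A0_auto.
  - eapply cconv_ext; [|apply cconv_mul; apply ext_form_limit; A0_auto].
    intros n. unfold phi. rewrite star_scal, mul_scal_r, (lin_scal Q w w_lin); A0_auto.
Qed.

Lemma ext_form_nonneg a : Cnonneg (ext_form a a).
Proof.
  apply (cconv_nonneg (fun n => phi (approx Q a n) (approx Q a n))).
  - intros n. apply w_L1. A0_auto.
  - apply ext_form_limit; A0_auto.
Qed.

Lemma ext_form_module a x y : A0 x -> A0 y -> ext_form (mul a x) y = ext_form x (mul (star a) y).
Proof.
  intros Hx Hy. eapply cconv_unique.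
  - apply (ext_form_limit (fun n => mul (approx Q a n) x) (fun _ => y));
      A0_auto; apply conv_mul_r; A0_auto.
  - eapply cconv_ext;
      [|apply (ext_form_limit (fun _ => x) (fun n => mul (star (approx Q a n)) y)); A0_auto].
    + intros n. unfold phi. rewrite star_mul, star_star, mul_assoc_l; A0_auto.
    + apply conv_mul_r, conv_star; A0_auto.
Qed.

Lemma ext_form_extends b y : A0 y -> ext_form b y = w (mul (star y) b).
Proof.
  intros Hy. eapply cconv_unique.
  - apply (ext_form_limit (approx Q b) (fun _ => y)); A0_auto.
  - apply (conv_cconv Q w (fun n => mul (star y) (approx Q b n))); auto.
    apply conv_mul_l; A0_auto.
Qed.

Lemma ext_form_bound a b : Cabs (ext_form a b) <= M * norm a * norm b.
Proof.
  apply (@Rle_cv_lim (fun n => Cabs (phi (approx Q a n) (approx Q b n)))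
                     (fun n => M * norm (approx Q b n) * norm (approx Q a n))).
  - intros n. apply w_bounded. A0_auto.
  - apply cconv_Cabs, ext_form_limit; A0_auto.
  - replace (M * norm a * norm b) with (M * norm b * norm a) by ring.
    apply CV_mult; [apply CV_mult; [apply Un_cv_const|]|]; apply conv_norm, conv_approx.
Qed.

Lemma scaled_ext_form_in_S : in_S Q (fun a b => Cmul (/ M, 0) (ext_form a b)).
Proof.
  assert (HiM : 0 < / M) by (apply Rinv_0_lt_compat; auto).
  repeat split.
  - intros a b c. rewrite ext_form_addl. C_ring.
  - intros l a c. rewrite ext_form_scall. C_ring.
  - intros a b c. rewrite ext_form_addr. C_ring.
  - intros l a c. rewrite ext_form_scalr. C_ring.
  - destruct (ext_form_nonneg a). destruct (ext_form a a). unfold_C. subst. ring.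
  - destruct (ext_form_nonneg a). destruct (ext_form a a). unfold_C. subst. nra.
  - intros a x y Hx Hy. rewrite ext_form_module; auto.
  - intros a b. rewrite Cabs_mul, Cabs_real, Rabs_right by lra.
    pose proof (ext_form_bound a b).
    apply Rmult_le_compat_l with (r := / M) in H; [|lra].
    replace (/ M * (M * norm a * norm b)) with (norm a * norm b) in H by (field; lra). exact H.
Qed.

End FormExtension.

Section Representable.
Variable Q : BanachQSA.
Implicit Types a b x y : Q.

Lemma Rc_extension w : Rc Q w -> exists Om r, in_S Q Om /\ 0 < r /\
  forall b y, A0 y -> Om b y = Cmul (r, 0) (w (mul (star y) b)).
Proof.
  intros [[Hlin [HL1 [_ HL3]]] Hc].
  destruct (form_bounded Q w Hlin Hc HL1 HL3) as [M [HM HB]].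
  exists (fun a b => Cmul (/ M, 0) (ext_form Q w a b)), (/ M).
  split; [eapply scaled_ext_form_in_S; eauto|].
  split; [apply Rinv_0_lt_compat; auto|].
  intros b y Hy. erewrite ext_form_extends; eauto.
Qed.

Lemma Rc_closure_domain w a : Rc Q w -> closure_domain Q w a.
Proof.
  intros [[Hlin [HL1 [_ HL3]]] Hc].
  destruct (form_bounded Q w Hlin Hc HL1 HL3) as [M [HM HB]].
  exists (approx Q a). split; [apply approx_A0|]. split; [apply conv_approx|].
  intros eps Heps.
  set (d := Rmin 1 (eps / M)).
  assert (Hd : 0 < d) by (apply Rmin_pos; [lra|]; apply Rdiv_lt_0_compat; lra).
  destruct (conv_close Q _ _ a (conv_approx Q a) (conv_approx Q a) d Hd) as [N HN].
  exists N. intros n m Hn Hm. specialize (HN n m Hn Hm).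
  set (u := sub (approx Q a n) (approx Q a m)) in *.
  eapply Rle_lt_trans; [apply HB, A0_sub; apply approx_A0|].
  pose proof (norm_nonneg u). assert (Hd1 : d <= 1) by apply Rmin_l.
  assert (HMd : M * d <= eps).
  { apply Rle_trans with (M * (eps / M)); [apply Rmult_le_compat_l; [lra|apply Rmin_r]|].
    right. field. lra. }
  assert (M * norm u < M * d) by (apply Rmult_lt_compat_l; lra).
  assert (M * norm u * norm u <= M * norm u * 1) by (apply Rmult_le_compat_l; nra).
  lra.
Qed.

Lemma nonneg_A0plus w p : linear_functional Q w ->
  (forall x, A0 x -> Cnonneg (w (mul (star x) x))) -> A0plus Q p -> Cnonneg (w p).
Proof.
  intros Hlin HL1 [l [_ [Hl ->]]]. induction Hl as [|x l Hx Hl IH]; simpl.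
  - rewrite (lin_zero Q w Hlin). unfold_C; split; lra.
  - rewrite (lin_add Q w Hlin). specialize (HL1 x Hx).
    destruct (w (mul (star x) x)), (w (fold_right _ _ l)). unfold_C. destruct HL1, IH. split; lra.
Qed.

Lemma Rc_nonneg_Aplus w a : Rc Q w -> Aplus Q a -> Cnonneg (w a).
Proof.
  intros [[Hlin [HL1 _]] Hc] Ha. apply Cnonneg_closed. intros eps Heps.
  destruct (Hc a eps Heps) as [d [Hd Hdd]]. destruct (Ha d Hd) as [p [Hp Hpa]].
  exists (w p). split; [apply (nonneg_A0plus w p); auto|]. apply Hdd. rewrite norm_sub_sym. auto.
Qed.

End Representable.

Definition form_functional (Q : BanachQSA) (Om : Q -> Q -> C) (x : Q) (b : Q) : C :=
  Om (mul b x) x.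

Section FormFunctional.
Variable Q : BanachQSA.
Implicit Types a b y z : Q.
Variable Om : Q -> Q -> C.
Hypothesis Om_addl : forall a b c, Om (add a b) c = Cadd (Om a c) (Om b c).
Hypothesis Om_scall : forall l a c, Om (scal l a) c = Cmul l (Om a c).
Hypothesis Om_addr : forall a b c, Om a (add b c) = Cadd (Om a b) (Om a c).
Hypothesis Om_scalr : forall l a c, Om a (scal l c) = Cmul (Cconj l) (Om a c).
Hypothesis Om_pos : forall a, Cnonneg (Om a a).
Hypothesis Om_module : forall a x y, A0 x -> A0 y -> Om (mul a x) y = Om x (mul (star a) y).
Hypothesis Om_bound : forall a b, Cabs (Om a b) <= norm a * norm b.
Variable x : Q.
Hypothesis Hx : A0 x.

Notation w := (form_functional Q Om x).

Lemma form_module_l a y z : A0 y -> A0 z -> Om y (mul a z) = Om (mul (star a) y) z.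
Proof. intros Hy Hz. rewrite Om_module, star_star; auto. Qed.

Lemma form_functional_mul b z : A0 z -> w (mul b z) = Om (mul z x) (mul (star b) x).
Proof.
  intros Hz. unfold form_functional. rewrite <- mul_assoc_r, Om_module; auto using A0_mul.
Qed.

Lemma form_functional_linear : linear_functional Q w.
Proof.
  split; intros; unfold form_functional; [rewrite mul_addl_r|rewrite mul_scal_r]; auto.
Qed.

Lemma form_functional_L1 y : A0 y -> Cnonneg (w (mul (star y) y)).
Proof. intros Hy. rewrite form_functional_mul, star_star; auto. Qed.

Lemma form_functional_L2 y z a : A0 y -> A0 z ->
  w (mul (mul (star y) (star a)) z) = Cconj (w (mul (mul (star z) a) y)).
Proof.
  intros Hy Hz. rewrite !form_functional_mul, !star_mul_l by auto using A0_star.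
  rewrite !star_star, <- !mul_assoc_r, form_module_l by auto using A0_mul.
  apply (form_herm Q Om); auto.
Qed.

Lemma form_functional_L3 a : exists g, 0 < g /\ forall z, A0 z ->
  Cabs (w (mul (star a) z)) <= g * sqrt (Re (w (mul (star z) z))).
Proof.
  exists (sqrt (Re (Om (mul a x) (mul a x))) + 1). split; [pose proof (sqrt_pos (Re (Om (mul a x) (mul a x)))); lra|].
  intros z Hz. rewrite !form_functional_mul, !star_star by auto.
  eapply Rle_trans; [apply (form_Cauchy_Schwarz Q Om); auto|].
  pose proof (sqrt_pos (Re (Om (mul a x) (mul a x)))).
  pose proof (sqrt_pos (Re (Om (mul z x) (mul z x)))). nra.
Qed.

Lemma form_functional_continuous : norm_continuous Q w.
Proof.
  intros a eps Heps. pose proof (norm_nonneg x).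
  destruct (mul_r_cont x Hx a (eps / (norm x + 1))) as [d [Hd Hdd]]; [apply Rdiv_lt_0_compat; lra|].
  exists d. split; auto. intros b Hb. fold (Csub (w b) (w a)). unfold form_functional.
  rewrite <- (form_subl Q Om Om_addl Om_scall).
  assert (Hn : norm (sub (mul b x) (mul a x)) < eps / (norm x + 1)) by exact (Hdd b Hb).
  eapply Rle_lt_trans; [apply Om_bound|].
  apply Rle_lt_trans with (eps / (norm x + 1) * norm x); [apply Rmult_le_compat_r; lra|].
  apply (Rmult_lt_reg_r (norm x + 1)); [lra|].
  replace (eps / (norm x + 1) * norm x * (norm x + 1)) with (eps * norm x) by (field; lra). nra.
Qed.

End FormFunctional.

Lemma form_functional_Rc (Q : BanachQSA) Om x : in_S Q Om -> A0 x -> Rc Q (form_functional Q Om x).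
Proof.
  intros [Haddl [Hscall [Haddr [Hscalr [Hpos [Hmod Hbd]]]]]] Hx.
  split; [split; [|split; [|split]]|].
  - apply form_functional_linear; auto.
  - apply form_functional_L1; auto.
  - intros; apply form_functional_L2; auto.
  - apply form_functional_L3; auto.
  - apply form_functional_continuous; auto.
Qed.

(* the expansions of B(x+y, x+y) and B(x+iy, x+iy) for a sesquilinear B *)
Lemma polarization_C (bxx bxy byx byy : C) : bxx = C0 -> byy = C0 ->
  Cadd (Cadd bxx bxy) (Cadd byx byy) = C0 ->
  Cadd (Cadd bxx (Cmul (Cconj (0, 1)) bxy)) (Cadd (Cmul (0, 1) byx) (Cmul (0, 1) (Cmul (Cconj (0, 1)) byy))) = C0 ->
  bxy = C0.
Proof.
  intros -> -> H1 H2. destruct_C. unfold_C.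
  injection H1; injection H2; intros. f_equal; lra.
Qed.

Section SemisimpleForms.
Variable Q : BanachQSA.
Implicit Types a b u x y : Q.
Variable Om : Q -> Q -> C.
Hypothesis Om_S : in_S Q Om.

Lemma module_form_zero a : (forall u, A0 u -> Om (mul a u) u = C0) ->
  forall x y, A0 x -> A0 y -> Om (mul a x) y = C0.
Proof.
  destruct Om_S as [Haddl [Hscall [Haddr [Hscalr _]]]].
  intros H0 x y Hx Hy.
  apply (polarization_C (Om (mul a x) x) (Om (mul a x) y) (Om (mul a y) x) (Om (mul a y) y)); auto.
  - rewrite <- !Haddr, <- Haddl, <- mul_addr_r by auto. apply H0, A0_add; auto.
  - specialize (H0 (add x (scal (0, 1) y)) (A0_add _ _ Hx (A0_scal _ _ Hy))).
    rewrite mul_addr_r, mul_scalr_r, Haddl, !Haddr, !Hscall, !Hscalr in H0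
      by auto using A0_scal. exact H0.
Qed.

Lemma S_detects_A0 a : Cpos (Om a a) -> exists y, A0 y /\ Om a y <> C0.
Proof.
  destruct Om_S as [_ [_ [Haddr [Hscalr [_ [_ Hbd]]]]]].
  intros Hpos. apply NNPP. intros Hno.
  assert (H0 : forall y, A0 y -> Om a y = C0)
    by (intros y Hy; apply NNPP; intros Hne; apply Hno; exists y; auto).
  assert (Haa : Om a a = C0).
  { apply Cabs_small_eq0. intros eps Heps. pose proof (norm_nonneg a).
    destruct (A0_dense a (eps / (norm a + 1))) as [y [Hy Hya]]; [apply Rdiv_lt_0_compat; lra|].
    fold (sub a y) in Hya. pose proof (Hbd a (sub a y)) as Hb.
    rewrite (form_subr Q Om Haddr Hscalr), (H0 y Hy), Csub_C0 in Hb.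
    pose proof (norm_nonneg (sub a y)).
    apply Rle_lt_trans with (norm a * (eps / (norm a + 1))); [nra|].
    apply (Rmult_lt_reg_r (norm a + 1)); [lra|].
    replace (norm a * (eps / (norm a + 1)) * (norm a + 1)) with (eps * norm a) by (field; lra).
    nra. }
  rewrite Haa in Hpos. unfold_C. lra.
Qed.

Lemma S_detects_module e a : is_unit Q e -> Cpos (Om a a) ->
  exists u, A0 u /\ Om (mul a u) u <> C0.
Proof.
  intros [He Hunit] Hpos. destruct (S_detects_A0 a Hpos) as [y [Hy Hay]].
  apply NNPP. intros Hno. apply Hay. rewrite <- (proj1 (Hunit a)).
  apply module_form_zero; auto.
  intros u Hu. apply NNPP. intros Hne. apply Hno. exists u. auto.
Qed.

End SemisimpleForms.

Lemma sufficient_fully_representable (Q : BanachQSA) : Rc_sufficient Q -> fully_representable Q.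
Proof. intros H. split; auto. intros a. right. intros w Hw. apply Rc_closure_domain; auto. Qed.

Section Equivalences.
Variable Q : BanachQSA.
Implicit Types a x : Q.
Variable e : Q.
Hypothesis He : is_unit Q e.

Lemma semisimple_sufficient : star_semisimple Q -> Rc_sufficient Q.
Proof.
  intros Hss a Ha Hne.
  destruct (Hss a Hne) as [Om [HS Hpos]].
  destruct (S_detects_module Q Om HS e a He Hpos) as [u [Hu Hau]].
  exists (form_functional Q Om u). split; [apply form_functional_Rc; auto|].
  pose proof (Rc_nonneg_Aplus Q _ a (form_functional_Rc Q Om u HS Hu) Ha) as [Him Hre].
  split; auto. destruct Hre as [Hre|Hre]; auto. exfalso. apply Hau.
  unfold form_functional in *. destruct (Om (mul a u) u). unfold_C. subst. auto.
Qed.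

Lemma S_null_Rc_null a : (forall Om, in_S Q Om -> Re (Om a a) = 0) ->
  forall w, Rc Q w -> w a = C0.
Proof.
  intros Hnull w Hw. destruct (Rc_extension Q w Hw) as [Om [r [HS [Hr Hext]]]].
  pose proof HS as [Haddl [Hscall [Haddr [Hscalr [Hpos _]]]]].
  pose proof (form_diag_zero Q Om Haddl Hscall Haddr Hscalr Hpos a e (Hnull Om HS)) as E.
  rewrite Hext, (unit_star Q e He), (proj2 (proj2 He a)) in E by exact (proj1 He).
  destruct (w a). unfold_C. injection E; intros. f_equal; nra.
Qed.

Lemma S_null_Rc_sandwich_null a : (forall Om, in_S Q Om -> Re (Om a a) = 0) ->
  forall w x, Rc Q w -> A0 x -> w (mul (mul (star x) a) x) = C0.
Proof.
  intros Hnull w x Hw Hx. destruct (Rc_extension Q w Hw) as [Om [r [HS [Hr Hext]]]].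
  pose proof (S_null_Rc_null a Hnull _ (form_functional_Rc Q Om x HS Hx)) as E.
  unfold form_functional in E. rewrite Hext, <- mul_assoc_mid in E by auto using A0_star.
  destruct (w (mul (mul (star x) a) x)). unfold_C. injection E; intros. f_equal; nra.
Qed.

Lemma sufficient_semisimple : condition_P Q -> Rc_sufficient Q -> star_semisimple Q.
Proof.
  intros HP Hsuff a Hne. apply NNPP. intros Hno.
  assert (Hnull : forall Om, in_S Q Om -> Re (Om a a) = 0).
  { intros Om HS. destruct (proj1 (proj2 (proj2 (proj2 (proj2 HS)))) a) as [Hi [Hr|Hr]]; auto.
    exfalso. apply Hno. exists Om. split; [|split]; auto. }
  assert (Ha : Aplus Q a).
  { apply HP. intros w Hw x Hx. rewrite (S_null_Rc_sandwich_null a Hnull w x Hw Hx).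
    unfold_C. split; lra. }
  destruct (Hsuff a Ha Hne) as [w [Hw Hpos]].
  rewrite (S_null_Rc_null a Hnull w Hw) in Hpos. unfold_C. lra.
Qed.

End Equivalences.

Theorem mainTheorem6 (Q : BanachQSA) (e : Q) (He : is_unit Q e) :
  (Rc_sufficient Q <-> fully_representable Q) /\
  (condition_P Q -> (Rc_sufficient Q <-> star_semisimple Q)).
Proof.
  split.
  - split; [apply sufficient_fully_representable | apply proj1].
  - intros HP. split; [apply (sufficient_semisimple Q e He HP) | apply (semisimple_sufficient Q e He)].
Qed.
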